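(* For every $h\in G$ and $n\in\mathbb Z$, the ideal $\{h^n\}^{\#\#}\lhd\kappa G^\#$ is contained in the ideal of $\kappa G^\#$ generated by $P_n(\bar h)$.
   Context: Let $\kappa$ be a field of characteristic $0$ and $G$ a group. Let $*:\kappa G\to\kappa G$ be the $\kappa$-linear map with $g^*=g^{-1}$, $(\kappa G)^*$ its fixed points, and $A_G$ the quotient of $\kappa G$ by the two-sided ideal generated by all $ab-ba$, $a\in\kappa G$, $b\in(\kappa G)^*$; $*$ descends to $A_G$, and $\kappa G^\#=\{x\in A_G:x^*=x\}$. Group elements are identified with their images in $A_G$, and $\bar x=\tfrac12(x+x^* )$. For $L\subset G$, $L^{\#\#}$ is the ideal of $\kappa G^\#$ generated by $\{\overline{xl}-\overline{xl^{-1}}:x\in A_G,l\in L\}$. The polynomials $P_n\in\kappa[X]$ are defined by $P_0=0$, $P_1=1$, $2XP_n=P_{n-1}+P_{n+1}$ for all $n\in\mathbb Z$. *)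

From HB Require Import structures.
From mathcomp Require Import all_boot all_order all_algebra.
Set Implicit Arguments. Unset Strict Implicit. Unset Printing Implicit Defensive.
Import Order.TTheory GRing.Theory Num.Theory.
Local Open Scope ring_scope.

Section GroupAlgebra.
Variables (K : fieldType) (G : groupType).

(** Elements of kG are represented by formal finite sums  sum_i c_i g_i,
    i.e. lists of (coefficient, group element) pairs. *)
Definition kG := seq (K * G).

Definition kcoef (x : kG) (g : G) : K := \sum_(p <- x | p.2 == g) p.1.

(** equality in kG: all coefficients agree *)
Definition keqv (x y : kG) : Prop := forall g, kcoef x g = kcoef y g.

Definition kadd (x y : kG) : kG := x ++ y.
Definition kopp (x : kG) : kG := [seq (- p.1, p.2) | p <- x].
Definition ksub (x y : kG) : kG := kadd x (kopp y).
Definition kscale (c : K) (x : kG) : kG := [seq (c * p.1, p.2) | p <- x].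
Definition kmul (x y : kG) : kG :=
  [seq (p.1 * q.1, (p.2 * q.2)%g) | p <- x, q <- y].
Definition kone : kG := [:: (1, 1%g)].
Definition kgrp (g : G) : kG := [:: (1, g)].
Definition kstar (x : kG) : kG := [seq (p.1, (p.2)^-1%g) | p <- x].
Definition kbar (x : kG) : kG := kscale 2^-1 (kadd x (kstar x)).

Definition ksym (b : kG) : Prop := keqv (kstar b) b.

(** The two-sided ideal I of kG generated by all ab - ba, a in kG, b in (kG)^*:
    the smallest subset containing 0 and all u (ab - ba) v, closed under sums
    and under equality in kG.  (Closure under scalars is automatic.) *)
Inductive inI : kG -> Prop :=
| inI_gen u v a b : ksym b -> inI (kmul (kmul u (ksub (kmul a b) (kmul b a))) v)
| inI_nil : inI [::]
| inI_add x y : inI x -> inI y -> inI (kadd x y)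
| inI_eqv x y : keqv x y -> inI x -> inI y.

(** A_G = kG / I; equality in A_G of (the images of) x and y *)
Definition eqA (x y : kG) : Prop := inI (ksub x y).

(** (the image in A_G of) x lies in kG^# = { x in A_G | x^* = x } *)
Definition sharp (x : kG) : Prop := eqA (kstar x) x.

(** The ideal of kG^# generated by a subset S of kG^# (given by representatives). *)
Inductive sharp_ideal (S : kG -> Prop) : kG -> Prop :=
| si_gen a s b : sharp a -> S s -> sharp b -> sharp_ideal S (kmul (kmul a s) b)
| si_nil : sharp_ideal S [::]
| si_add x y : sharp_ideal S x -> sharp_ideal S y -> sharp_ideal S (kadd x y)
| si_eqA x y : eqA x y -> sharp_ideal S x -> sharp_ideal S y.

Definition sharpsharp (L : G -> Prop) : kG -> Prop :=
  sharp_ideal (fun y => exists x l, L l /\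
     y = ksub (kbar (kmul x (kgrp l))) (kbar (kmul x (kgrp (l^-1)%g)))).

Definition kpeval (p : {poly K}) (x : kG) : kG :=
  foldr (fun c acc => kadd (kmul acc x) (kscale c kone)) [::] p.

End GroupAlgebra.

Definition gexpz (G : groupType) (h : G) (n : int) : G :=
  match n with
  | Posz k => (h ^+ k)%g
  | Negz k => ((h ^+ k.+1)^-1)%g
  end.

(** The polynomials P_n, n in Z:  P_0 = 0, P_1 = 1, 2 X P_n = P_(n-1) + P_(n+1). *)
Fixpoint Ppair (K : fieldType) (n : nat) : {poly K} * {poly K} :=
  match n with
  | 0 => (0, 1)
  | n'.+1 => let (a, b) := Ppair K n' in (b, 2%:R *: 'X * b - a)
  end.
Definition Pnat (K : fieldType) (n : nat) : {poly K} := (Ppair K n).1.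
Definition Pcheb (K : fieldType) (n : int) : {poly K} :=
  match n with
  | Posz k => Pnat K k
  | Negz k => - Pnat K k.+1
  end.

Lemma Pnat_rec (K : fieldType) (n : nat) :
  Pnat K n.+2 = 2%:R *: 'X * Pnat K n.+1 - Pnat K n.
Proof. rewrite /Pnat /=; by case: (Ppair K n). Qed.
Lemma Pcheb0 (K : fieldType) : Pcheb K 0 = 0. Proof. by []. Qed.
Lemma Pcheb1 (K : fieldType) : Pcheb K 1 = 1. Proof. by []. Qed.
Lemma Pcheb_rec (K : fieldType) (n : int) :
  2%:R *: 'X * Pcheb K n = Pcheb K (n - 1) + Pcheb K (n + 1).
Proof.
case: n => [[|k]|k].
- by rewrite /= /Pnat /= mulr0 addrC subrr.
- have -> : (k.+1%:Z - 1) = Posz k by rewrite -addn1 PoszD addrK.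
  have -> : (k.+1%:Z + 1) = Posz k.+2 by rewrite -[k.+2]addn1 PoszD.
  by rewrite /= Pnat_rec addrC subrK.
- have -> : Negz k - 1 = Negz k.+1 by rewrite !NegzE -opprD -[1]/(Posz 1) -PoszD addn1.
  case: k => [|k].
  + have -> : Negz 0 + 1 = 0 by [].
    by rewrite /= /Pnat /= mulrN mulr1 subr0 addr0.
  + have -> : Negz k.+1 + 1 = Negz k by rewrite !NegzE -addn1 PoszD opprD addrNK.
    by rewrite /Pcheb [Pnat K k.+3]Pnat_rec opprB addrAC subrr add0r mulrN.
Qed.

From HB Require Import structures.
From mathcomp Require Import all_boot all_order all_algebra.
From mathcomp Require Import ring.
Set Implicit Arguments. Unset Strict Implicit. Unset Printing Implicit Defensive.
Import GRing.Theory.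
Local Open Scope ring_scope.

(* Write X := bar h and D := h - h^-1.  The argument has three ingredients.
   1. Chebyshev identity (in kG itself):  h^n - h^-n = P_n(X) D.  It is proved
      coefficientwise: right multiplication by X and by D shifts coefficients
      by h^{+-1}, and the coefficient functions of P_k(X) satisfy the
      three-term recurrence of the P_k.
   2. In A_G every *-symmetric element is central (I contains every ab - ba
      with b fixed by the involution), and P_n(X) is *-symmetric because X
      is.  Hence for all x,
        bar(x h^n) - bar(x h^-n) = bar(x P_n(X) D) = bar(x D) P_n(X)  in A_G.
   3. Since char K <> 2, products of elements of kG^# stay in kG^#, so every
      generator a (bar(x h^n) - bar(x h^-n)) b of {h^n}^## equals
      (a bar(xD)) P_n(X) b, an element of the ideal generated by P_n(X). *)

Section GroupAlgebraCalculus.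
Variables (K : fieldType) (G : groupType).
Local Notation kG := (kG K G).
Implicit Types x y z u v a b c d : kG.

Lemma kcoefE x g : kcoef x g = \sum_(p <- x) (if p.2 == g then p.1 else 0).
Proof. by rewrite /kcoef big_mkcond. Qed.

Lemma kcoef_nil g : kcoef ([::] : kG) g = 0.
Proof. by rewrite kcoefE big_nil. Qed.

Lemma kcoef_add x y g : kcoef (kadd x y) g = kcoef x g + kcoef y g.
Proof. by rewrite !kcoefE big_cat. Qed.

Lemma kcoef_scale (k : K) x g : kcoef (kscale k x) g = k * kcoef x g.
Proof.
rewrite !kcoefE big_map big_distrr.
by apply: eq_bigr => p _ /=; case: ifP; rewrite ?mulr0.
Qed.

Lemma kcoef_opp x g : kcoef (kopp x) g = - kcoef x g.
Proof.
rewrite !kcoefE big_map -sumrN.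
by apply: eq_bigr => p _ /=; case: ifP; rewrite ?oppr0.
Qed.

Lemma kcoef_sub x y g : kcoef (ksub x y) g = kcoef x g - kcoef y g.
Proof. by rewrite kcoef_add kcoef_opp. Qed.

Lemma kcoef_star x g : kcoef (kstar x) g = kcoef x g^-1.
Proof. by rewrite !kcoefE big_map; apply: eq_bigr => p _ /=; rewrite eqg_invLR. Qed.

Lemma kcoef_bar x g : kcoef (kbar x) g = 2^-1 * (kcoef x g + kcoef x g^-1).
Proof. by rewrite kcoef_scale kcoef_add kcoef_star. Qed.

Lemma kcoef_grp (a g : G) : kcoef (kgrp K a) g = if a == g then 1 else 0.
Proof. by rewrite kcoefE big_cons big_nil addr0. Qed.

Lemma kcoef_mul x y g : kcoef (kmul x y) g =
  \sum_(p <- x) \sum_(q <- y) (if (p.2 * q.2)%g == g then p.1 * q.1 else 0).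
Proof. by rewrite kcoefE /kmul big_allpairs_dep. Qed.

Lemma kcoef_mull x y g :
  kcoef (kmul x y) g = \sum_(p <- x) p.1 * kcoef y (p.2^-1 * g)%g.
Proof.
rewrite kcoef_mul; apply: eq_bigr => p _; rewrite kcoefE big_distrr.
apply: eq_bigr => q _ /=.
have -> : ((p.2 * q.2)%g == g) = (q.2 == p.2^-1 * g)%g.
  by apply/eqP/eqP => [<-|->]; rewrite ?mulKg ?mulVKg.
by case: ifP; rewrite ?mulr0.
Qed.

Lemma kcoef_mulr x y g :
  kcoef (kmul x y) g = \sum_(q <- y) kcoef x (g * q.2^-1)%g * q.1.
Proof.
rewrite kcoef_mul exchange_big; apply: eq_bigr => q _; rewrite kcoefE big_distrl.
apply: eq_bigr => p _ /=.
have -> : ((p.2 * q.2)%g == g) = (p.2 == g * q.2^-1)%g.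
  by apply/eqP/eqP => [<-|->]; rewrite ?mulgK ?mulgVK.
by case: ifP; rewrite ?mul0r.
Qed.

Lemma keqv_sym x y : keqv x y -> keqv y x.
Proof. by move=> E g; rewrite E. Qed.

Lemma keqv_trans x y z : keqv x y -> keqv y z -> keqv x z.
Proof. by move=> E1 E2 g; rewrite E1 E2. Qed.

Lemma keqv_add x x' y y' : keqv x x' -> keqv y y' -> keqv (kadd x y) (kadd x' y').
Proof. by move=> E1 E2 g; rewrite !kcoef_add E1 E2. Qed.

Lemma keqv_scale (k : K) x x' : keqv x x' -> keqv (kscale k x) (kscale k x').
Proof. by move=> E g; rewrite !kcoef_scale E. Qed.

Lemma keqv_star x x' : keqv x x' -> keqv (kstar x) (kstar x').
Proof. by move=> E g; rewrite !kcoef_star E. Qed.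

Lemma keqv_bar x x' : keqv x x' -> keqv (kbar x) (kbar x').
Proof. by move=> E; apply/keqv_scale/keqv_add/keqv_star. Qed.

Lemma keqv_mul x x' y y' : keqv x x' -> keqv y y' -> keqv (kmul x y) (kmul x' y').
Proof.
move=> E1 E2 g; rewrite kcoef_mull (eq_bigr _ (fun p _ => congr1 _ (E2 _))).
rewrite -kcoef_mull kcoef_mulr.
by rewrite (eq_bigr _ (fun p _ => congr1 (fun t => t * _) (E1 _))) -kcoef_mulr.
Qed.

Lemma kmulA x y z : keqv (kmul (kmul x y) z) (kmul x (kmul y z)).
Proof.
move=> g; rewrite !kcoef_mul /kmul big_allpairs_dep; apply: eq_bigr => p _.
rewrite big_allpairs_dep; apply: eq_bigr => q _; apply: eq_bigr => s _ /=.
by rewrite mulgA mulrA.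
Qed.

Lemma kmulDl x y z : keqv (kmul (kadd x y) z) (kadd (kmul x z) (kmul y z)).
Proof. by move=> g; rewrite kcoef_add !kcoef_mull big_cat. Qed.

Lemma kmulDr x y z : keqv (kmul x (kadd y z)) (kadd (kmul x y) (kmul x z)).
Proof. by move=> g; rewrite kcoef_add !kcoef_mulr big_cat. Qed.

Lemma kmulZl (k : K) x y : keqv (kmul (kscale k x) y) (kscale k (kmul x y)).
Proof.
move=> g; rewrite kcoef_scale !kcoef_mull big_map big_distrr.
by apply: eq_bigr => p _ /=; rewrite mulrA.
Qed.

Lemma kmulBl x y z : keqv (kmul (ksub x y) z) (ksub (kmul x z) (kmul y z)).
Proof.
move=> g; rewrite kcoef_sub !kcoef_mull big_cat big_map /= -sumrN.
by congr (_ + _); apply: eq_bigr => p _; rewrite mulNr.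
Qed.

Lemma kmulBr x y z : keqv (kmul x (ksub y z)) (ksub (kmul x y) (kmul x z)).
Proof.
move=> g; rewrite kcoef_sub !kcoef_mulr big_cat big_map /= -sumrN.
by congr (_ + _); apply: eq_bigr => q _; rewrite mulrN.
Qed.

Lemma kmul1l x : keqv (kmul (kone K G) x) x.
Proof. by move=> g; rewrite kcoef_mull big_seq1 /= invg1 mul1g mul1r. Qed.

Lemma kmul1r x : keqv (kmul x (kone K G)) x.
Proof. by move=> g; rewrite kcoef_mulr big_seq1 /= invg1 mulg1 mulr1. Qed.

Lemma kmul0r x : keqv (kmul x [::]) [::].
Proof. by move=> g; rewrite kcoef_mulr big_nil kcoef_nil. Qed.

Lemma kstar_add x y : kstar (kadd x y) = kadd (kstar x) (kstar y).
Proof. exact: map_cat. Qed.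

Lemma kstarM x y : keqv (kstar (kmul x y)) (kmul (kstar y) (kstar x)).
Proof.
move=> g; rewrite kcoef_star !kcoef_mul /kstar big_map exchange_big.
apply: eq_bigr => q _; rewrite big_map; apply: eq_bigr => p _ /=.
by rewrite mulrC -eqg_inv invgK invgM.
Qed.

Lemma kbar_sym x : ksym (kbar x).
Proof. by move=> g; rewrite kcoef_star !kcoef_bar invgK addrC. Qed.

Lemma kbar_sub x y : keqv (kbar (ksub x y)) (ksub (kbar x) (kbar y)).
Proof. by move=> g; rewrite !(kcoef_sub, kcoef_bar, kcoef_star); ring. Qed.

End GroupAlgebraCalculus.

Section QuotientAG.
Variables (K : fieldType) (G : groupType).
Local Notation kG := (kG K G).
Implicit Types x y z u v a b c d s t : kG.

Lemma inI_keqv0 x : keqv x [::] -> inI x.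
Proof. by move=> E; apply: inI_eqv (keqv_sym E) (inI_nil K G). Qed.

Lemma inI_mulr x w : inI x -> inI (kmul x w).
Proof.
elim=> [u v a b Hb||x1 y1 _ I1 _ I2|x1 y1 E _ I1].
- by apply: inI_eqv (keqv_sym (kmulA _ _ _)) _; apply: inI_gen.
- exact: inI_nil.
- by apply: inI_eqv (keqv_sym (kmulDl _ _ _)) _; apply: inI_add.
- by apply: inI_eqv I1; apply: keqv_mul.
Qed.

Lemma inI_mull x w : inI x -> inI (kmul w x).
Proof.
elim=> [u v a b Hb||x1 y1 _ I1 _ I2|x1 y1 E _ I1].
- apply: inI_eqv (inI_gen (kmul w u) v a Hb).
  apply: keqv_trans (kmulA _ _ _) _; apply: keqv_trans (kmulA _ _ _) _.
  by apply: keqv_mul => //; apply: keqv_sym (kmulA _ _ _).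
- exact: inI_keqv0 (kmul0r _).
- by apply: inI_eqv (keqv_sym (kmulDr _ _ _)) _; apply: inI_add.
- by apply: inI_eqv I1; apply: keqv_mul.
Qed.

Lemma inI_scale (k : K) x : inI x -> inI (kscale k x).
Proof.
move=> Ix; apply: inI_eqv (inI_mull (kscale k (kone K G)) Ix).
by apply: keqv_trans (kmulZl _ _ _) _; apply/keqv_scale/kmul1l.
Qed.

Lemma eqA_keqv x y : keqv x y -> eqA x y.
Proof. by move=> E; apply: inI_keqv0 => g; rewrite kcoef_sub E subrr kcoef_nil. Qed.

Lemma eqA_refl x : eqA x x.
Proof. exact: eqA_keqv. Qed.

Lemma eqA_sym x y : eqA x y -> eqA y x.
Proof.
move=> E; apply: inI_eqv (inI_scale (-1) E) => g.
by rewrite !(kcoef_scale, kcoef_sub); ring.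
Qed.

Lemma eqA_trans x y z : eqA x y -> eqA y z -> eqA x z.
Proof.
move=> E1 E2; apply: inI_eqv (inI_add E1 E2) => g.
by rewrite kcoef_add !kcoef_sub addrA subrK.
Qed.

Lemma eqA_add x x' y y' : eqA x x' -> eqA y y' -> eqA (kadd x y) (kadd x' y').
Proof.
move=> E1 E2; apply: inI_eqv (inI_add E1 E2) => g.
by rewrite !(kcoef_add, kcoef_sub) opprD addrACA.
Qed.

Lemma eqA_scale (k : K) x x' : eqA x x' -> eqA (kscale k x) (kscale k x').
Proof.
move=> E; apply: inI_eqv (inI_scale k E) => g.
by rewrite !(kcoef_scale, kcoef_sub) mulrBr.
Qed.

Lemma eqA_mul x x' y y' : eqA x x' -> eqA y y' -> eqA (kmul x y) (kmul x' y').
Proof.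
move=> E1 E2; apply: (@eqA_trans _ (kmul x' y)).
  by apply: inI_eqv (inI_mulr y E1); apply: kmulBl.
by apply: inI_eqv (inI_mull x' E2); apply: kmulBr.
Qed.

Lemma ksym_central a b : ksym b -> eqA (kmul a b) (kmul b a).
Proof.
move=> Hb; apply: inI_eqv (inI_gen (kone K G) (kone K G) a Hb).
by apply: keqv_trans (kmul1r _) _; apply: kmul1l.
Qed.

Lemma eqA_mul_sym_right y s d : ksym s ->
  eqA (kmul y (kmul s d)) (kmul (kmul y d) s).
Proof.
move=> Hs.
apply: eqA_trans (eqA_mul (eqA_refl y) (eqA_sym (ksym_central d Hs))) _.
exact/eqA_keqv/keqv_sym/kmulA.
Qed.

Lemma kbar_mul_sym x s d : ksym s ->
  eqA (kbar (kmul x (kmul s d))) (kmul (kbar (kmul x d)) s).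
Proof.
move=> Hs.
have star_xsd : keqv (kstar (kmul x (kmul s d))) (kmul (kstar d) (kmul s (kstar x))).
  apply: keqv_trans (kstarM _ _) _; apply: keqv_trans _ (kmulA _ _ _).
  apply: keqv_mul => //; apply: keqv_trans (kstarM _ _) _.
  exact: keqv_mul.
apply: (@eqA_trans _ (kscale 2^-1 (kadd (kmul (kmul x d) s)
                                        (kmul (kmul (kstar d) (kstar x)) s)))).
  apply/eqA_scale/eqA_add; first exact: eqA_mul_sym_right.
  exact: eqA_trans (eqA_keqv star_xsd) (eqA_mul_sym_right _ _ Hs).
apply/eqA_keqv/keqv_sym; apply: keqv_trans (kmulZl _ _ _) _; apply: keqv_scale.
apply: keqv_trans (kmulDl _ _ _) _; apply: keqv_add => //.
by apply: keqv_mul => //; apply: kstarM.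
Qed.

Section CharNot2.
Hypothesis two_nz : (2%:R : K) != 0.

Lemma sharp_bar x : sharp x -> eqA x (kbar x).
Proof.
move=> Hx; apply: inI_eqv (inI_scale (- 2^-1) Hx) => g.
by rewrite !(kcoef_scale, kcoef_sub, kcoef_star, kcoef_bar); field.
Qed.

Lemma sharp_central a s : sharp s -> eqA (kmul a s) (kmul s a).
Proof.
move=> Hs; apply: (eqA_trans (eqA_mul (eqA_refl a) (sharp_bar Hs))).
apply: eqA_trans (ksym_central a (kbar_sym s)) _.
exact: eqA_mul (eqA_sym (sharp_bar Hs)) (eqA_refl a).
Qed.

Lemma sharp_mul a c : sharp a -> sharp c -> sharp (kmul a c).
Proof.
move=> Ha Hc; rewrite /sharp; apply: eqA_trans (eqA_keqv (kstarM a c)) _.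
exact: eqA_trans (eqA_mul Hc Ha) (eqA_sym (sharp_central a Hc)).
Qed.

Lemma sharp_ideal_sub (S T : kG -> Prop) :
  (forall s, S s -> exists c t, [/\ sharp c, T t & eqA s (kmul c t)]) ->
  forall y, sharp_ideal S y -> sharp_ideal T y.
Proof.
move=> ST y; elim=> [a s b Ha Ss Hb||x y' _ Ix _ Iy|x y' E _ Ix].
- have [c [t [Hc Tt Est]]] := ST s Ss.
  apply: (si_eqA _ (si_gen (sharp_mul Ha Hc) Tt Hb)).
  apply: (eqA_mul _ (eqA_refl b)).
  apply: eqA_trans (eqA_keqv (kmulA _ _ _)) _.
  exact: eqA_mul (eqA_refl a) (eqA_sym Est).
- exact: si_nil.
- exact: si_add.
- exact: si_eqA E Ix.
Qed.

End CharNot2.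
End QuotientAG.

Section PolynomialEvaluation.
Variables (K : fieldType) (G : groupType).
Local Notation kG := (kG K G).
Implicit Types (x y : kG) (p q : {poly K}).

Definition kpow x i : kG := iter i (fun y => kmul y x) (kone K G).

Lemma kcoef_mul_lin y x (N : nat) (c : nat -> K) (B : nat -> kG) g :
  (forall g', kcoef y g' = \sum_(i < N) c i * kcoef (B i) g') ->
  kcoef (kmul y x) g = \sum_(i < N) c i * kcoef (kmul (B i) x) g.
Proof.
move=> Ey; rewrite kcoef_mulr.
under eq_bigr do rewrite Ey big_distrl.
rewrite exchange_big; apply: eq_bigr => i _ /=.
by rewrite kcoef_mulr big_distrr; apply: eq_bigr => q _; rewrite -mulrA.
Qed.

Definition khorner (s : seq K) x : kG :=
  foldr (fun c acc => kadd (kmul acc x) (kscale c (kone K G))) [::] s.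

Lemma khorner_cons c s x :
  khorner (c :: s) x = kadd (kmul (khorner s x) x) (kscale c (kone K G)).
Proof. by []. Qed.

Lemma kcoef_horner (s : seq K) x g :
  kcoef (khorner s x) g = \sum_(i < size s) s`_i * kcoef (kpow x i) g.
Proof.
elim: s g => [|c s IH] g; first by rewrite big_ord0 kcoef_nil.
rewrite kcoef_add kcoef_scale big_ord_recl addrC; congr (_ + _).
exact: (@kcoef_mul_lin _ x (size s) (fun i => s`_i) (kpow x) g IH).
Qed.

Lemma kcoef_kpeval N p x g : (size p <= N)%N ->
  kcoef (kpeval p x) g = \sum_(i < N) p`_i * kcoef (kpow x i) g.
Proof.
move=> sizep; rewrite kcoef_horner (big_ord_widen N (fun i => p`_i * kcoef (kpow x i) g) sizep) big_mkcond.
by apply: eq_bigr => i _; case: ltnP => // ?; rewrite nth_default ?mul0r.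
Qed.

Lemma kcoef_kpevalD p q x g :
  kcoef (kpeval (p + q) x) g = kcoef (kpeval p x) g + kcoef (kpeval q x) g.
Proof.
have sizeD : (size (p + q)%R <= size p + size q)%N.
  by apply: leq_trans (size_polyD p q) _; rewrite geq_max leq_addr leq_addl.
rewrite (kcoef_kpeval x g sizeD) !(kcoef_kpeval x g (_ : size _ <= size p + size q)%N)
  ?leq_addr ?leq_addl // -big_split.
by apply: eq_bigr => i _; rewrite coefD mulrDl.
Qed.

Lemma kcoef_kpevalZ (k : K) p x g :
  kcoef (kpeval (k *: p) x) g = k * kcoef (kpeval p x) g.
Proof.
rewrite (kcoef_kpeval x g (size_scale_leq k p)) (kcoef_kpeval x g (leqnn _)) big_distrr.
by apply: eq_bigr => i _; rewrite coefZ -mulrA.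
Qed.

Lemma kcoef_kpevalN p x g : kcoef (kpeval (- p) x) g = - kcoef (kpeval p x) g.
Proof. by rewrite -scaleN1r kcoef_kpevalZ mulN1r. Qed.

Lemma kcoef_kpevalXM p x g :
  kcoef (kpeval ('X * p) x) g = kcoef (kmul (kpeval p x) x) g.
Proof.
have sizeXp : (size ('X * p)%R <= (size p).+1)%N.
  have [->|p_nz] := eqVneq p 0; first by rewrite mulr0 size_poly0.
  by rewrite mulrC size_mulX.
rewrite (kcoef_kpeval x g sizeXp) big_ord_recl coefXM /= mul0r add0r.
rewrite (@kcoef_mul_lin _ x (size p) (fun i => p`_i) (kpow x) g (fun g0 => kcoef_kpeval x g0 (leqnn _))).
by apply: eq_bigr => i _; rewrite coefXM.
Qed.

Lemma khorner_comm s x : keqv (kmul (khorner s x) x) (kmul x (khorner s x)).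
Proof.
elim: s => [|c s IH]; first exact: keqv_sym (kmul0r _).
rewrite khorner_cons; apply: keqv_trans (kmulDl _ _ _) _; apply: keqv_sym.
apply: keqv_trans (kmulDr _ _ _) _; apply: keqv_add.
  by apply: keqv_trans (keqv_sym (kmulA _ _ _)) _; apply: keqv_mul (keqv_sym IH) _.
move=> g; rewrite kcoef_mull kcoef_mulr; apply: eq_bigr => q _.
rewrite !kcoefE !big_seq1 /= ![(1 == _)%g]eq_sym mulg_eq1 eqg_inv divg_eq1.
by rewrite [(g == _)%g]eq_sym mulrC.
Qed.

Lemma khorner_star s x : keqv (kstar (khorner s x)) (khorner s (kstar x)).
Proof.
elim: s => [|c s IH] //; rewrite !khorner_cons kstar_add.
apply: keqv_add; last first.
  by move=> g; rewrite kcoef_star !kcoef_scale !kcoefE !big_seq1 /= -{1}invg1 eqg_inv.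
apply: keqv_trans (kstarM _ _) _; apply: keqv_trans _ (keqv_sym (khorner_comm _ _)).
exact: keqv_mul.
Qed.

Lemma khorner_keqv s x y : keqv x y -> keqv (khorner s x) (khorner s y).
Proof.
move=> Exy; elim: s => [|c s IH] //; rewrite !khorner_cons.
by apply: keqv_add => //; apply: keqv_mul.
Qed.

Lemma kpeval_sym p x : ksym x -> ksym (kpeval p x).
Proof.
move=> Hx; apply: keqv_trans (khorner_star _ _) _; exact: khorner_keqv.
Qed.

End PolynomialEvaluation.

Lemma nat_ind2 (P : nat -> Prop) :
  P 0%N -> P 1%N -> (forall k, P k -> P k.+1 -> P k.+2) -> forall k, P k.
Proof.
move=> P0 P1 PS k; suff: P k /\ P k.+1 by case.
by elim: k => [|k [Pk Pk1]]; split => //; apply: PS.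
Qed.

Lemma eq_mulgV (G : groupType) (a b g : G) : (a == g * b^-1)%g = (a * b == g)%g.
Proof. by apply/eqP/eqP => [->|<-]; rewrite ?mulgVK ?mulgK. Qed.

Lemma eq_mulg (G : groupType) (a b g : G) : (a == g * b)%g = (a * b^-1 == g)%g.
Proof. by apply/eqP/eqP => [->|<-]; rewrite ?mulgK ?mulgVK. Qed.

Section Chebyshev.
Variables (K : fieldType) (G : groupType) (h : G).
Hypothesis two_nz : (2%:R : K) != 0.
Local Notation kG := (kG K G).
Local Notation X := (kbar (kgrp K h)).
Local Notation D := (ksub (kgrp K h) (kgrp K h^-1)).

Lemma kcoef_mulX (y : kG) g :
  kcoef (kmul y X) g = 2^-1 * (kcoef y (g * h^-1)%g + kcoef y (g * h)%g).
Proof.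
by rewrite kcoef_mulr /kbar /kscale /kadd /kstar /kgrp /= !big_cons big_nil /= invgK; ring.
Qed.

Lemma kcoef_mulD (y : kG) g :
  kcoef (kmul y D) g = kcoef y (g * h^-1)%g - kcoef y (g * h)%g.
Proof.
by rewrite kcoef_mulr /ksub /kopp /kadd /kgrp /= !big_cons big_nil /= invgK; ring.
Qed.

Lemma kcoef_kpeval_rec (p q : {poly K}) g :
  kcoef (kpeval (2%:R *: 'X * p - q) X) g =
  kcoef (kpeval p X) (g * h^-1)%g + kcoef (kpeval p X) (g * h)%g
  - kcoef (kpeval q X) g.
Proof.
rewrite -scalerAl kcoef_kpevalD kcoef_kpevalZ kcoef_kpevalN kcoef_kpevalXM.
by rewrite kcoef_mulX mulrA mulfV // mul1r.
Qed.

Local Notation F k g := (kcoef (kpeval (Pnat K k) X) g).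
Local Notation delta a g := (if (a == g)%g then (1 : K) else 0).

Lemma F_rec k g : F k.+2 g = F k.+1 (g * h^-1)%g + F k.+1 (g * h)%g - F k g.
Proof. by rewrite Pnat_rec kcoef_kpeval_rec. Qed.

Lemma F0 g : F 0 g = 0.
Proof. by rewrite (kcoef_kpeval _ _ (_ : size (Pnat K 0) <= 0)%N) ?big_ord0 ?size_poly0. Qed.

Lemma F1 g : F 1 g = delta 1%g g.
Proof.
rewrite (kcoef_kpeval _ _ (_ : size (Pnat K 1) <= 1)%N) ?size_poly1 //.
by rewrite big_ord1 coef1 mul1r kcoefE big_seq1.
Qed.

Lemma F_cheb k g :
  F k (g * h^-1)%g - F k (g * h)%g = delta (h ^+ k)%g g - delta (h ^+ k)^-1%g g.
Proof.
elim/nat_ind2: k g => [g|g|k IH0 IH1 g].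
- by rewrite !F0 expg0 invg1 !subrr.
- by rewrite !F1 expg1 eq_mulgV eq_mulg mul1g div1g ![(_ == g)%g]eq_sym.
have := IH1 (g * h^-1)%g; rewrite mulgVK eq_mulgV eq_mulgV -expgSr.
have -> : ((h ^+ k.+1)^-1 * h = (h ^+ k)^-1)%g by rewrite expgS invgM mulgVK.
have := IH1 (g * h)%g; rewrite mulgK eq_mulg eq_mulg -invgM -expgS.
have -> : (h ^+ k.+1 * h^-1 = h ^+ k)%g by rewrite expgSr mulgK.
rewrite !F_rec mulgVK mulgK => IH1r IH1l.
transitivity ((F k.+1 (g * h^-1 * h^-1)%g - F k.+1 g)
  + (F k.+1 g - F k.+1 (g * h * h)%g) - (F k (g * h^-1)%g - F k (g * h)%g)).
  by ring.
rewrite IH1l IH1r IH0.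
by move: (delta _ g) (delta _ g) (delta _ g) (delta _ g) => a b c d; ring.
Qed.

Lemma kpeval_cheb n :
  keqv (ksub (kgrp K (gexpz h n)) (kgrp K (gexpz h n)^-1))
       (kmul (kpeval (Pcheb K n) X) D).
Proof.
move=> g; rewrite kcoef_sub !kcoef_grp kcoef_mulD; case: n => k /=.
  by rewrite F_cheb.
by rewrite !kcoef_kpevalN invgK -[LHS]opprK opprB -F_cheb; ring.
Qed.
End Chebyshev.


Theorem mainTheorem11 (K : fieldType) (charK0 : [pchar K] =i pred0)
    (G : groupType) (h : G) (n : int) :
  forall y : kG K G,
    sharpsharp (fun l => l = gexpz h n) y ->
    sharp_ideal (fun s => s = kpeval (Pcheb K n) (kbar (kgrp K h))) y.
Proof.
have two_nz : (2%:R : K) != 0 by rewrite (pcharf0P _).1.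
set X := kbar (kgrp K h); set D := ksub (kgrp K h) (kgrp K h^-1).
set Pn := kpeval (Pcheb K n) X.
apply: sharp_ideal_sub => // _ [x [l [-> ->]]].
exists (kbar (kmul x D)), Pn; split => //; first exact/eqA_keqv/kbar_sym.
(* bar(x h^n) - bar(x h^-n) = bar(x (h^n - h^-n)) = bar(x Pn D) = bar(x D) Pn *)
apply: eqA_trans (kbar_mul_sym x D (kpeval_sym (Pcheb K n) (kbar_sym _))).
apply/eqA_keqv/keqv_sym; apply: keqv_trans (kbar_sub _ _); apply: keqv_bar.
apply: keqv_trans (kmulBr _ _ _); apply: keqv_mul => //.
exact/keqv_sym/kpeval_cheb.
Qed.
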